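(* Let $q$ be any prime power and let $\mathcal{C}$ be the Hermitian-Lifted Code (defined in the context). Then $\mathcal{C}$ has locality $q$ and availability $q^2-1$: for every coordinate (indexed by a point $P \in \mathcal{X}$) there are $q^2-1$ pairwise disjoint sets of coordinates, each of size $q$ and not containing $P$, such that for every codeword $c \in \mathcal{C}$ the symbol $c_P$ can be recovered from the symbols of $c$ indexed by any one of these sets.
   Context: Let $q$ be a prime power. Let $\mathcal{X} = \{(x,y) \in (\mathbb{F}_{q^2})^2 : x^q + x = y^{q+1}\}$ be the set of affine $\mathbb{F}_{q^2}$-rational points of the Hermitian curve; $|\mathcal{X}| = q^3$. For $\alpha,\beta \in \mathbb{F}_{q^2}$, let $L_{\alpha,\beta}(t) = (\alpha t + \beta, t)$, and $\mathcal{L} = \{L_{\alpha,\beta} : \alpha,\beta \in \mathbb{F}_{q^2}\}$. Let $\mathcal{F}$ be the set of $f \in \mathbb{F}_{q^2}[x,y]$ such that for every $L \in \mathcal{L}$ there exists $g \in \mathbb{F}_{q^2}[t]$ with $\deg g \leq q-1$ and $f(L(t)) = g(t)$ for all $t \in \mathbb{F}_{q^2}$ with $L(t) \in \mathcal{X}$. The Hermitian-Lifted Code is $\mathcal{C} = \{ (f(P))_{P \in \mathcal{X}} : f \in \mathcal{F}\}$. A set $R$ of coordinates not containing $i$ is a recovery set for coordinate $i$ if $c_i$ is determined by $(c_j)_{j\in R}$ for every codeword $c$; a code has locality $r$ and availability $t$ if every coordinate has $t$ pairwise disjoint recovery sets each of size at most $r$. *)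

From HB Require Import structures.
From mathcomp Require Import all_boot all_order all_algebra all_field.
From mathcomp Require Import mpoly.
Set Implicit Arguments. Unset Strict Implicit. Unset Printing Implicit Defensive.
Import GRing.Theory.
Local Open Scope ring_scope.

Definition ev2 (F : finFieldType) (f : {mpoly F[2]}) (P : F * F) : F :=
  f.@[fun i : 'I_2 => if val i == 0%N then P.1 else P.2].

Definition herm_pts (F : finFieldType) (q : nat) : {set F * F} :=
  [set P : F * F | P.1 ^+ q + P.1 == P.2 ^+ q.+1].

Definition line_pt (F : finFieldType) (alpha beta t : F) : F * F :=
  (alpha * t + beta, t).

Definition lifted (F : finFieldType) (q : nat) (f : {mpoly F[2]}) : Prop :=
  forall alpha beta : F, exists g : {poly F},
    (size g <= q)%N /\
    forall t : F, line_pt alpha beta t \in herm_pts F q ->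
      ev2 f (line_pt alpha beta t) = g.[t].

(* codewords of the Hermitian-lifted code: words indexed by F*F whose
   coordinates at the points of herm_pts are (f(P))_P for some lifted f
   (coordinates outside the curve are irrelevant and ignored). *)
Definition herm_codeword (F : finFieldType) (q : nat) (c : F * F -> F) : Prop :=
  exists f : {mpoly F[2]}, lifted q f /\ forall P, P \in herm_pts F q -> c P = ev2 f P.

Definition recovery_set (F : finFieldType) (q : nat) (P : F * F) (R : {set F * F}) : Prop :=
  R \subset herm_pts F q /\ P \notin R /\
  forall c c' : F * F -> F, herm_codeword q c -> herm_codeword q c' ->
    (forall Q, Q \in R -> c Q = c' Q) -> c P = c' P.

(* Fix P = (a, b) on the curve. For each of the q^2 - 1 slopes alpha <> b^q, the line
   x = alpha y + (a - alpha b) = L_{alpha, a - alpha b}(y) passes through P and meets the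
   curve in at least q further points; this is a counting argument on the solutions of
   w^q + w + 1 = 0, which parametrise those points. Two such lines only share P. On each
   line a lifted f agrees with a polynomial of degree < q in y, so its values at q points
   of the line other than P determine that polynomial, hence f(P). *)
From HB Require Import structures.
From mathcomp Require Import all_boot all_order all_algebra all_field.
From mathcomp Require Import mpoly.
From mathcomp Require Import ring zify.
Set Implicit Arguments. Unset Strict Implicit. Unset Printing Implicit Defensive.
Local Open Scope ring_scope.
Import GRing.Theory.

Lemma exists_subset_card (T : finType) (A : {set T}) (n : nat) :
  (n <= #|A|)%N -> exists B : {set T}, B \subset A /\ #|B| = n.
Proof.
move=> leA; exists [set x in take n (enum A)]; split.
  by apply/subsetP => x; rewrite inE => /mem_take; rewrite mem_enum.
rewrite cardsE (card_uniqP _) ?take_uniq ?enum_uniq //.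
by rewrite size_takel // -cardE.
Qed.

Lemma card_roots_lt_size (R : finIdomainType) (p : {poly R}) :
  p != 0 -> (#|[set x | root p x]| < size p)%N.
Proof.
move=> p0; rewrite cardE; apply: max_poly_roots => //; last exact: enum_uniq.
by apply/allP => x; rewrite mem_enum inE.
Qed.

Lemma eq_poly_on_card (R : finIdomainType) (S : {set R}) (n : nat) (g g' : {poly R}) :
  (n <= #|S|)%N -> (size g <= n)%N -> (size g' <= n)%N ->
  {in S, forall x, g.[x] = g'.[x]} -> g = g'.
Proof.
move=> leS sg sg' eqS; apply/eqP; rewrite -subr_eq0; apply/eqP.
apply: (@roots_geq_poly_eq0 _ _ (enum S)); last 1 first.
- apply: leq_trans (size_polyD _ _) _.
  by rewrite size_polyN geq_max -cardE !(leq_trans _ leS).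
- by apply/allP => x; rewrite mem_enum => xS; rewrite rootE !hornerE eqS ?subrr.
- exact: enum_uniq.
Qed.

Definition punctured_line (F : finFieldType) (q : nat) (a b alpha : F) : {set F * F} :=
  [set Q in herm_pts F q | (Q.1 == alpha * Q.2 + (a - alpha * b)) && (Q.2 != b)].

Lemma punctured_lines_disjoint (F : finFieldType) (q : nat) (a b alpha alpha' : F) :
  alpha != alpha' ->
  [disjoint punctured_line q a b alpha & punctured_line q a b alpha'].
Proof.
move=> neq; rewrite -setI_eq0; apply/set0Pn => -[[x y]].
rewrite !inE /= => /andP[/and3P[_ /eqP ex yb] /and3P[_ /eqP ex' _]].
have : (alpha - alpha') * (y - b) = 0.
  transitivity ((alpha * y + (a - alpha * b)) - (alpha' * y + (a - alpha' * b))); first ring.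
  by rewrite -ex -ex' subrr.
by move/eqP; rewrite mulf_eq0 !subr_eq0 (negbTE neq) (negbTE yb).
Qed.

Lemma punctured_line_recovery (F : finFieldType) (q : nat) (a b alpha : F) (R : {set F * F}) :
  (a, b) \in herm_pts F q -> #|R| = q -> R \subset punctured_line q a b alpha ->
  recovery_set q (a, b) R.
Proof.
move=> Pab cardR /subsetP sR; set beta := a - alpha * b.
have onR Q : Q \in R -> [/\ Q \in herm_pts F q, line_pt alpha beta Q.2 = Q & Q.2 != b].
  by case: Q => x y /sR; rewrite inE /= => /and3P[-> /eqP -> ->].
have Pline : line_pt alpha beta b = (a, b) by rewrite /line_pt addrC subrK.
split; [|split].
- by apply/subsetP => Q /onR[].
- by apply/negP => /onR[_ _]; rewrite eqxx.
move=> c c' [f [lf cf]] [f' [lf' cf']] eqR.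
have [g [sg fg]] := lf alpha beta; have [g' [sg' fg']] := lf' alpha beta.
have cardS : #|[set Q.2 | Q in R]| = q.
  rewrite card_in_imset // => Q Q' /onR[_ eQ _] /onR[_ eQ' _] e.
  by rewrite -eQ -eQ' e.
suff eqg : g = g' by rewrite cf // cf' // -Pline fg ?fg' ?Pline ?eqg.
apply: (eq_poly_on_card (S := [set Q.2 | Q in R]) _ sg sg'); first by rewrite cardS.
move=> _ /imsetP[Q QR ->]; have [QX eQ _] := onR Q QR.
by rewrite -fg ?eQ // -fg' ?eQ // -cf // -cf' // eqR.
Qed.

Section HermitianCurve.

Variables (F : finFieldType) (q : nat).
Hypotheses (q_pchar : [pchar F].-nat q) (card_F : #|F| = (q ^ 2)%N).

Lemma frobD (u v : F) : (u + v) ^+ q = u ^+ q + v ^+ q.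
Proof. exact: exprDn_pchar. Qed.

Lemma frobN (u : F) : (- u) ^+ q = - u ^+ q.
Proof. exact: exprNn_pchar. Qed.

Lemma frobK (u : F) : u ^+ q ^+ q = u.
Proof. by rewrite -exprM mulnn -card_F expf_card. Qed.

Lemma q_gt1 : (1 < q)%N.
Proof.
have [q_gt0 _] := andP q_pchar.
rewrite ltn_neqAle q_gt0 andbT; apply/eqP => q1.
by have := card_finNzRing_gt1 F; rewrite card_F -q1.
Qed.

Lemma trace_root_neq0 (w : F) : w ^+ q + w + 1 = 0 -> w != 0.
Proof.
move=> hw; apply: contra_eq_neq hw => ->.
by rewrite expr0n gtn_eqF ?(ltnW q_gt1) // !add0r oner_neq0.
Qed.

Lemma card_trace_roots : (q <= #|[set w : F | (w ^+ q + w + 1 == 0)%R]|)%N.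
Proof.
set Z := [set w | _]; pose A : {poly F} := 'X^q + 'X + 1.
have evalA w : A.[w] = w ^+ q + w + 1 by rewrite !hornerE.
have sizeA : size A = q.+1.
  rewrite /A -addrA size_polyDl ?size_polyXn // -polyC1 size_XaddC ltnS.
  exact: q_gt1.
have sizeB : size (A ^+ q.-1 - 1) = (q * q.-1).+1.
  have A_neq0 : A != 0 by rewrite -size_poly_eq0 sizeA.
  have sizeAX : size (A ^+ q.-1) = (q * q.-1).+1.
    have := size_exp A q.-1; rewrite sizeA /= => <-.
    by apply/esym/prednK; rewrite lt0n size_poly_eq0 expf_neq0.
  rewrite size_polyDl sizeAX // size_polyN size_poly1 ltnS.
  by have := q_gt1; nia.
(* Off Z, y = A.[w] is nonzero and fixed by y |-> y^q, so it is a (q-1)-th root of unity. *)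
have notZ_root : ~: Z \subset [set w | root (A ^+ q.-1 - 1) w].
  apply/subsetP => w; rewrite !inE rootE hornerD hornerN horner_exp evalA hornerC.
  rewrite subr_eq0 => yn0.
  set y := w ^+ q + w + 1 in yn0 *.
  have yq : y ^+ q = y by rewrite /y !frobD frobK expr1n [w + _]addrC.
  by apply/eqP/(mulIf yn0); rewrite mul1r -exprSr prednK // (ltnW q_gt1).
have B_neq0 : A ^+ q.-1 - 1 != 0 by rewrite -size_poly_eq0 sizeB.
have := card_roots_lt_size B_neq0.
rewrite sizeB ltnS => /(leq_trans (subset_leq_card notZ_root)) le_notZ.
have := cardsC Z; rewrite card_F; have := q_gt1; nia.
Qed.

(* With s = t - b, the curve equation along the line reduces, since (a, b) is on the curve,
   to s^(q+1) = (alpha^q - b) s^q + (alpha - b^q) s; divided by s^(q+1) it says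
   w^q + w + 1 = 0 for w = (b - alpha^q) / s. *)
Lemma line_param_in_herm (a b alpha w : F) :
  (a, b) \in herm_pts F q -> w ^+ q + w + 1 = 0 ->
  line_pt alpha (a - alpha * b) (b + (b - alpha ^+ q) / w) \in herm_pts F q.
Proof.
rewrite !inE /= => /eqP hab hw.
have wq : w ^+ q = - (w + 1) by apply/eqP; rewrite -addr_eq0 addrA hw.
have w_neq0 := trace_root_neq0 hw.
have w1_neq0 : - (w + 1) != 0 by rewrite -wq expf_neq0.
set s := (b - alpha ^+ q) / w.
have sq : s ^+ q = (b ^+ q - alpha) / - (w + 1).
  by rewrite /s exprMn exprVn frobD frobN frobK wq.
have aq : a ^+ q = b ^+ q * b - a by rewrite -exprSr -hab addrK.
have -> : alpha * (b + s) + (a - alpha * b) = alpha * s + a by ring.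
apply/eqP; rewrite frobD exprMn sq aq exprS frobD sq /s.
by field; rewrite w_neq0 w1_neq0.
Qed.

Lemma card_punctured_line (a b alpha : F) :
  (a, b) \in herm_pts F q -> alpha != b ^+ q ->
  (q <= #|punctured_line q a b alpha|)%N.
Proof.
move=> Pab alpha_neq; pose Z := [set w : F | w ^+ q + w + 1 == 0].
have D_neq0 : b - alpha ^+ q != 0.
  by apply: contra alpha_neq; rewrite subr_eq0 => /eqP ->; rewrite frobK.
pose Q w := line_pt alpha (a - alpha * b) (b + (b - alpha ^+ q) / w).
have QZ_sub : Q @: Z \subset punctured_line q a b alpha.
  apply/subsetP => _ /imsetP[w + ->]; rewrite inE => /eqP hw.
  rewrite inE line_param_in_herm //= eqxx /= -subr_eq0 addrC addKr.
  by rewrite mulf_neq0 // invr_neq0 // (trace_root_neq0 hw).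
have Q_inj : {in Z &, injective Q}.
  by move=> w w' _ _ /(congr1 snd) /addrI /(mulfI D_neq0) /invr_inj.
apply: leq_trans card_trace_roots _.
by rewrite -(card_in_imset Q_inj) subset_leq_card.
Qed.

End HermitianCurve.

Theorem mainTheorem2 (F : finFieldType) (q : nat) :
  (exists p k : nat, [/\ prime p, (0 < k)%N & q = (p ^ k)%N]) ->
  #|F| = (q ^ 2)%N ->
  forall P : F * F, P \in herm_pts F q ->
  exists R : 'I_(q ^ 2 - 1) -> {set F * F},
    (forall i, #|R i| = q /\ recovery_set q P (R i)) /\
    (forall i j, i != j -> [disjoint R i & R j]).
Proof.
move=> [p [k [p_prime _ qE]]] card_F [a b] Pab.
have q_pchar : [pchar F].-nat q.
  have p_char : p \in [pchar F].
    by apply: (card_finPcharP (n := (k * 2)%N)); rewrite // card_F qE expnM.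
  by rewrite qE pnatX (pnatE _ p_prime) p_char.
pose slopes := [set~ b ^+ q].
have <- : #|slopes| = (q ^ 2 - 1)%N by rewrite cardsC1 card_F subn1.
have lines (i : 'I_#|slopes|) : exists B : {set F * F},
    B \subset punctured_line q a b (enum_val i) /\ #|B| = q.
  apply/exists_subset_card/card_punctured_line => //.
  by have := enum_valP i; rewrite !inE.
have [R R_line] := fin_all_exists lines.
exists R; split => [i | i j neq_ij].
  have [R_sub card_R] := R_line i.
  by split => //; apply: punctured_line_recovery R_sub.
have [sub_i _] := R_line i; have [sub_j _] := R_line j.
apply: disjointW sub_i sub_j _; apply: punctured_lines_disjoint.
by rewrite (inj_eq enum_val_inj).
Qed.
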